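(* $\mathsf{WBWT}_2\le_W\overline{\mathsf C_\mathbb N}$ and $\mathsf{WBWT}_2\not\le_W\mathsf C_\mathbb N$.
   Context: A problem $f:\subseteq X\rightrightarrows Y$ between represented spaces is a partial multi-valued map; $F\vdash f$ means $\delta_YF(p)\in f(\delta_X(p))$ whenever $\delta_X(p)\in\mathrm{dom}(f)$; $f\le_W g$ iff there are computable partial $H,K$ with $H\langle\mathrm{id},GK\rangle\vdash f$ for all $G\vdash g$. $\mathsf{WBWT}_2:2^\mathbb N\rightrightarrows2^\mathbb N$ maps $p$ to the set of $q\in2^\mathbb N$ such that $\lim_{n}q(n)$ exists and is a cluster point of $p$ (i.e. a value occurring infinitely often in $p$). $\mathcal A_-(\mathbb N)$ is the space of subsets of $\mathbb N$ represented by negative information ($p$ names $\mathbb N\setminus\{n:n+1\in\mathrm{range}(p)\}$); $\mathsf C_\mathbb N:\subseteq\mathcal A_-(\mathbb N)\rightrightarrows\mathbb N$, $A\mapsto A$, on nonempty $A$, with $\mathbb N$ represented by $p\mapsto p(0)$. For $p\in\mathbb{N}^\mathbb{N}$, $p-1$ is the concatenation of $p(0)-1,p(1)-1,\dots$ with $0-1$ the empty word; the completion of $(X,\delta_X)$ is $\overline X=X\cup\{\bot\}$ with $\delta_{\overline X}(p)=\delta_X(p-1)$ if $p-1$ is an infinite sequence in $\mathrm{dom}(\delta_X)$, $\bot$ otherwise; $\overline f:\overline X\rightrightarrows\overline Y$ equals $f$ on $\mathrm{dom}(f)$ and $\overline Y$ elsewhere. *)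

From Stdlib Require Import List Arith PeanoNat.
Import ListNotations.

Definition baire := nat -> nat.

Inductive code : Type :=
| cZero : code
| cSucc : code
| cProj : nat -> code
| cComp : code -> list code -> code
| cPrim : code -> code -> code
| cMu : code -> code.

Inductive eval : code -> list nat -> nat -> Prop :=
| eZero v : eval cZero v 0
| eSucc x v : eval cSucc (x :: v) (S x)
| eProj i v : i < length v -> eval (cProj i) v (nth i v 0)
| eComp f gs v ws y : evals gs v ws -> eval f ws y -> eval (cComp f gs) v y
| ePrim0 f g v y : eval f v y -> eval (cPrim f g) (0 :: v) y
| ePrimS f g n v z y :
    eval (cPrim f g) (n :: v) z -> eval g (n :: z :: v) y ->
    eval (cPrim f g) (S n :: v) y
| eMu f v n :
    eval f (n :: v) 0 ->
    (forall m, m < n -> exists k, eval f (m :: v) (S k)) ->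
    eval (cMu f) v n
with evals : list code -> list nat -> list nat -> Prop :=
| esNil v : evals nil v nil
| esCons g gs v w ws : eval g v w -> evals gs v ws -> evals (g :: gs) v (w :: ws).

Definition cpair (x y : nat) : nat := (x + y) * (x + y + 1) / 2 + y.
Fixpoint enc (l : list nat) : nat :=
  match l with
  | nil => 0
  | x :: l' => S (cpair x (enc l'))
  end.
Definition prefix (p : baire) (k : nat) : list nat := map p (seq 0 k).

(* The partial functional on Baire space computed by (the associate) c:
   F_c(p) = q iff for every n, at the first prefix length k where
   c(n, p|k) returns a nonzero value (all earlier calls converging to 0),
   that value is q(n)+1. These are exactly the computable partial maps
   (up to restriction of domains). *)
Definition CompF (c : code) (p q : baire) : Prop :=
  forall n, exists k,
    eval c [n; enc (prefix p k)] (S (q n)) /\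
    (forall k', k' < k -> eval c [n; enc (prefix p k')] 0).

Definition bpair (p q : baire) : baire :=
  fun n => if Nat.even n then p (Nat.div2 n) else q (Nat.div2 n).

Record rep : Type := Rep {
  carrier : Type;
  delta : baire -> carrier -> Prop   (* graph of the partial representation *)
}.

Definition problem (X Y : rep) := carrier X -> carrier Y -> Prop.
Definition dom {X Y : rep} (f : problem X Y) (x : carrier X) : Prop :=
  exists y, f x y.

Definition functional (F : baire -> baire -> Prop) : Prop :=
  forall p q q', F p q -> F p q' -> q = q'.

Definition realizes {X Y : rep} (F : baire -> baire -> Prop) (f : problem X Y) : Prop :=
  forall p x, delta X p x -> dom f x ->
    exists q y, F p q /\ delta Y q y /\ f x y.

Definition Wred {X Y Z W : rep} (f : problem X Y) (g : problem Z W) : Prop :=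
  exists cH cK : code,
    forall G : baire -> baire -> Prop, functional G -> realizes G g ->
      realizes (fun p r => exists k s, CompF cK p k /\ G k s /\
                                       CompF cH (bpair p s) r) f.

Definition Cantor : rep :=
  Rep (nat -> bool) (fun p q => forall n, p n = if q n then 1 else 0).

Definition NatR : rep := Rep nat (fun p n => p 0 = n).

Definition Aminus : rep :=
  Rep (nat -> Prop) (fun p A => forall n, A n <-> ~ exists i, p i = S n).

Definition minus1 (p q : baire) : Prop :=
  exists e : nat -> nat,
    (forall i, e i < e (S i)) /\
    (forall j, p j <> 0 <-> exists i, e i = j) /\
    (forall i, q i = p (e i) - 1).

Definition completion (X : rep) : rep :=
  Rep (option (carrier X))
      (fun p x => match x with
                  | Some x' => exists q, minus1 p q /\ delta X q x'
                  | None => ~ exists q x', minus1 p q /\ delta X q x'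
                  end).

Definition bar {X Y : rep} (f : problem X Y) : problem (completion X) (completion Y) :=
  fun x y => match x with
             | Some x' => dom f x' -> exists y', y = Some y' /\ f x' y'
             | None => True
             end.

Definition cluster (p : nat -> bool) (b : bool) : Prop :=
  forall N, exists n, N <= n /\ p n = b.

Definition WBWT2 : problem Cantor Cantor :=
  fun (p q : nat -> bool) =>
    exists b, (exists N, forall n, N <= n -> q n = b) /\ cluster p b.

Definition CN : problem Aminus NatR := fun (A : nat -> Prop) (n : nat) => A n.

From Stdlib Require Import List Arith PeanoNat Lia Classical ClassicalEpsilon FunctionalExtensionality.
Import ListNotations.

(** Reduction: a bit sequence [p] is sent to the [A_-(N)]-name in which every [1] of [p]
    removes the number of [1]s preceding it. The named set is [{n | n >= number of 1s}],
    nonempty exactly when [p] has finitely many [1]s. From a possibly undefined [C_N]-answer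
    [a], the output at [i] is [0] iff [a] is known and exceeds the number of [1]s among the
    first [i + 1] bits: eventually [0] if [p] has finitely many [1]s (then [a] bounds them),
    eventually [1] otherwise.

    Non-reduction: fix the realizer of [C_N] returning the least element, and build [x] by
    finite extensions, padding alternately with [1]s and [0]s until the reduction has output
    the padding bit beyond the stage number. The least element of the set named from [x] is
    fixed by a finite prefix of [x] (the smaller numbers are removed within it, and it is
    never removed), so the stage computations remain valid for [x], whose output then takes
    both values infinitely often. *)

(** * Primitive recursive codes *)

Lemma eval_comp f gs v ws y : eval f ws y -> evals gs v ws -> eval (cComp f gs) v y.
Proof. intros; eapply eComp; eauto. Qed.

Lemma eval_prim_rec f g v (h : nat -> nat) :
  eval f v (h 0) -> (forall n, eval g (n :: h n :: v) (h (S n))) ->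
  forall n, eval (cPrim f g) (n :: v) (h n).
Proof. intros H0 HS n; induction n; [constructor; auto | eapply ePrimS; eauto]. Qed.

Definition ifz (a b c : nat) : nat := match a with 0 => b | S _ => c end.

Create HintDb eval_db.

Ltac eval_tac :=
  lazymatch goal with
  | |- evals nil _ _ => apply esNil
  | |- evals (_ :: _) _ _ => eapply esCons; [eval_tac | eval_tac]
  | |- eval (cComp _ _) _ _ => eapply eval_comp; [eval_tac | eval_tac]
  | |- eval (cProj _) _ _ => apply eProj; simpl; lia
  | |- eval cZero _ _ => apply eZero
  | |- eval cSucc _ _ => apply eSucc
  | |- _ => solve [eauto with eval_db]
  end.

Definition cOne := cComp cSucc [cZero].

Definition cPred := cPrim cZero (cProj 0).
Lemma eval_pred n : eval cPred [n] (pred n).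
Proof. apply (eval_prim_rec _ _ [] pred); [eval_tac | intro m; eval_tac]. Qed.
Hint Resolve eval_pred : eval_db.

Definition cAdd := cPrim (cProj 0) (cComp cSucc [cProj 1]).
Lemma eval_add a b : eval cAdd [a; b] (a + b).
Proof. apply (eval_prim_rec _ _ [b] (fun n => n + b)); [eval_tac | intro m; eval_tac]. Qed.
Hint Resolve eval_add : eval_db.

Definition cDouble := cComp cAdd [cProj 0; cProj 0].
Lemma eval_double a : eval cDouble [a] (2 * a).
Proof. replace (2 * a) with (a + a) by lia. unfold cDouble; eval_tac. Qed.
Hint Resolve eval_double : eval_db.

Definition cSub := cComp (cPrim (cProj 0) (cComp cPred [cProj 1])) [cProj 1; cProj 0].
Lemma eval_sub a b : eval cSub [a; b] (a - b).
Proof.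
  eapply eval_comp; [|eval_tac].
  apply (eval_prim_rec _ _ [a] (fun n => a - n)); intros.
  - rewrite Nat.sub_0_r; eval_tac.
  - replace (a - S n) with (pred (a - n)) by lia; eval_tac.
Qed.
Hint Resolve eval_sub : eval_db.

Definition cIfz := cPrim (cProj 0) (cProj 3).
Lemma eval_ifz a b c : eval cIfz [a; b; c] (ifz a b c).
Proof. apply (eval_prim_rec _ _ [b; c] (fun n => ifz n b c)); [eval_tac | intro m; eval_tac]. Qed.
Hint Resolve eval_ifz : eval_db.

Fixpoint tri t := match t with 0 => 0 | S t' => tri t' + S t' end.
Definition cTri := cPrim cZero (cComp cAdd [cProj 1; cComp cSucc [cProj 0]]).
Lemma eval_tri t : eval cTri [t] (tri t).
Proof. apply (eval_prim_rec _ _ [] tri); [eval_tac | intro m; eval_tac]. Qed.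
Hint Resolve eval_tri : eval_db.

Fixpoint tri_root z := match z with
  | 0 => 0
  | S z' => ifz (tri (S (tri_root z')) - S z') (S (tri_root z')) (tri_root z')
  end.
Definition cTriRoot := cPrim cZero (cComp cIfz
  [cComp cSub [cComp cTri [cComp cSucc [cProj 1]]; cComp cSucc [cProj 0]];
   cComp cSucc [cProj 1]; cProj 1]).
Lemma eval_tri_root z : eval cTriRoot [z] (tri_root z).
Proof. apply (eval_prim_rec _ _ [] tri_root); [eval_tac | intro m; eval_tac]. Qed.
Hint Resolve eval_tri_root : eval_db.

Definition unpair2 w := w - tri (tri_root w).
Definition unpair1 w := tri_root w - unpair2 w.
Definition cUnpair2 := cComp cSub [cProj 0; cComp cTri [cComp cTriRoot [cProj 0]]].
Definition cUnpair1 := cComp cSub [cComp cTriRoot [cProj 0]; cUnpair2].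
Lemma eval_unpair2 w : eval cUnpair2 [w] (unpair2 w).
Proof. unfold cUnpair2, unpair2; eval_tac. Qed.
Hint Resolve eval_unpair2 : eval_db.
Lemma eval_unpair1 w : eval cUnpair1 [w] (unpair1 w).
Proof. unfold cUnpair1, unpair1; eval_tac. Qed.
Hint Resolve eval_unpair1 : eval_db.

Lemma cpair_tri x y : cpair x y = tri (x + y) + y.
Proof.
  assert (Htri : forall t, 2 * tri t = t * (t + 1)) by (induction t; simpl tri; nia).
  unfold cpair. rewrite <- Htri, Nat.mul_comm, Nat.div_mul; lia.
Qed.

Lemma tri_mono a b : a <= b -> tri a <= tri b.
Proof. induction 1; simpl; lia. Qed.

Lemma tri_root_spec z : tri (tri_root z) <= z < tri (S (tri_root z)).
Proof.
  induction z; simpl; [lia|].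
  unfold ifz. destruct (tri (tri_root z) + S (tri_root z) - S z) eqn:E; simpl in *; lia.
Qed.

Lemma tri_root_unique t z : tri t <= z < tri (S t) -> tri_root z = t.
Proof.
  intros H. pose proof (tri_root_spec z).
  destruct (Nat.lt_trichotomy (tri_root z) t) as [h|[h|h]]; auto.
  - pose proof (tri_mono (S (tri_root z)) t h). lia.
  - pose proof (tri_mono (S t) (tri_root z) h). lia.
Qed.

Lemma unpair_cpair x y : unpair1 (cpair x y) = x /\ unpair2 (cpair x y) = y.
Proof.
  assert (Hr : tri_root (cpair x y) = x + y)
    by (apply tri_root_unique; rewrite cpair_tri; simpl; lia).
  unfold unpair1, unpair2. rewrite Hr, cpair_tri. lia.
Qed.

Definition word_hd w := unpair1 (pred w).
Definition word_tl w := unpair2 (pred w).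
Definition cWordHd := cComp cUnpair1 [cComp cPred [cProj 0]].
Definition cWordTl := cComp cUnpair2 [cComp cPred [cProj 0]].
Lemma eval_word_hd w : eval cWordHd [w] (word_hd w).
Proof. unfold cWordHd, word_hd; eval_tac. Qed.
Lemma eval_word_tl w : eval cWordTl [w] (word_tl w).
Proof. unfold cWordTl, word_tl; eval_tac. Qed.
Hint Resolve eval_word_hd eval_word_tl : eval_db.

Lemma word_hd_enc x l : word_hd (enc (x :: l)) = x.
Proof. apply unpair_cpair. Qed.

Lemma word_tl_enc l : word_tl (enc l) = enc (tl l).
Proof. destruct l; [reflexivity | apply unpair_cpair]. Qed.

Fixpoint word_drop i w := match i with 0 => w | S i' => word_tl (word_drop i' w) end.
Definition cWordDrop := cPrim (cProj 0) (cComp cWordTl [cProj 1]).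
Lemma eval_word_drop i w : eval cWordDrop [i; w] (word_drop i w).
Proof. apply (eval_prim_rec _ _ [w] (fun i => word_drop i w)); [eval_tac | intro m; eval_tac]. Qed.
Hint Resolve eval_word_drop : eval_db.

Lemma word_drop_enc i l : word_drop i (enc l) = enc (skipn i l).
Proof.
  induction i; simpl; [reflexivity|].
  rewrite IHi, word_tl_enc. f_equal. clear IHi. revert l.
  induction i; intros [|a l]; simpl; auto.
Qed.

Lemma word_drop_prefix p i k : word_drop i (enc (prefix p k)) = enc (map p (seq i (k - i))).
Proof. unfold prefix. rewrite word_drop_enc, skipn_map, skipn_seq. reflexivity. Qed.

Lemma word_drop_prefix_end p i k : k <= i -> word_drop i (enc (prefix p k)) = 0.
Proof. intros. rewrite word_drop_prefix. replace (k - i) with 0 by lia. reflexivity. Qed.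

Lemma word_drop_prefix_inside p i k : i < k ->
  word_drop i (enc (prefix p k)) <> 0 /\ word_hd (word_drop i (enc (prefix p k))) = p i.
Proof.
  intros. rewrite word_drop_prefix. destruct (k - i) eqn:E; [lia|].
  split; [discriminate | apply word_hd_enc].
Qed.

Lemma CompF_by_modulus c p q (m : nat -> nat) :
  (forall n k, eval c [n; enc (prefix p k)] (if k <=? m n then 0 else S (q n))) ->
  CompF c p q.
Proof.
  intros H n. exists (S (m n)). split.
  - specialize (H n (S (m n))). rewrite (proj2 (Nat.leb_gt _ _)) in H by lia. exact H.
  - intros k Hk. specialize (H n k). rewrite (proj2 (Nat.leb_le _ _)) in H by lia. exact H.
Qed.

Fixpoint code_nested_ind (P : code -> Prop)
  (H0 : P cZero) (H1 : P cSucc) (H2 : forall i, P (cProj i))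
  (H3 : forall f gs, P f -> Forall P gs -> P (cComp f gs))
  (H4 : forall f g, P f -> P g -> P (cPrim f g))
  (H5 : forall f, P f -> P (cMu f)) (c : code) {struct c} : P c :=
  let IH := code_nested_ind P H0 H1 H2 H3 H4 H5 in
  match c with
  | cZero => H0 | cSucc => H1 | cProj i => H2 i
  | cComp f gs => H3 f gs (IH f)
      ((fix go (l : list code) : Forall P l :=
         match l with nil => Forall_nil _ | g :: l' => Forall_cons _ (IH g) (go l') end) gs)
  | cPrim f g => H4 f g (IH f) (IH g)
  | cMu f => H5 f (IH f)
  end.

Definition eval_deterministic (c : code) : Prop :=
  forall v y y', eval c v y -> eval c v y' -> y = y'.

Lemma evals_deterministic gs v ws ws' : Forall eval_deterministic gs ->
  evals gs v ws -> evals gs v ws' -> ws = ws'.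
Proof.
  intros Hgs; revert ws ws'.
  induction Hgs; intros ws ws' E E'; inversion E; inversion E'; subst; f_equal; eauto.
Qed.

(* Induction on codes rather than on derivations: the [cMu] case needs the
   induction hypothesis at the derivations hidden under [exists k]. *)
Lemma eval_functional c : eval_deterministic c.
Proof.
  induction c using code_nested_ind; intros v y y' E E'.
  - inversion E; inversion E'; auto.
  - inversion E; inversion E'; subst; congruence.
  - inversion E; inversion E'; subst; congruence.
  - inversion E; inversion E'; subst.
    match goal with Ha : evals gs v ?a, Hb : evals gs v ?b |- _ =>
      assert (a = b) by (eapply evals_deterministic; eauto) end.
    subst; eauto.
  - destruct v as [|n v]; [inversion E|]. revert y y' E E'.
    induction n; intros y y' E E'; inversion E; inversion E'; subst; eauto.
    match goal with Ha : eval (cPrim c1 c2) (n :: v) ?a,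
                    Hb : eval (cPrim c1 c2) (n :: v) ?b |- _ =>
      assert (a = b) by (eapply IHn; eauto) end.
    subst; eauto.
  - inversion E; inversion E'; subst.
    assert (Hnot : forall a b, a < b -> eval c (a :: v) 0 ->
              ~ forall m, m < b -> exists k, eval c (m :: v) (S k)).
    { intros a b Hab Ha Hlt. destruct (Hlt a Hab) as [k Hk].
      discriminate (IHc _ _ _ Ha Hk). }
    destruct (Nat.lt_trichotomy y y') as [h|[h|h]]; auto; exfalso; eapply Hnot; eauto.
Qed.

Definition answers_at (c : code) (p : baire) (i L v : nat) : Prop :=
  eval c [i; enc (prefix p L)] (S v) /\
  forall L', L' < L -> eval c [i; enc (prefix p L')] 0.

Lemma answers_at_unique c p i L L' v v' :
  answers_at c p i L v -> answers_at c p i L' v' -> v = v'.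
Proof.
  intros [A1 A2] [B1 B2].
  destruct (Nat.lt_trichotomy L L') as [h|[->|h]].
  - discriminate (eval_functional _ _ _ _ A1 (B2 _ h)).
  - injection (eval_functional _ _ _ _ A1 B1); auto.
  - discriminate (eval_functional _ _ _ _ B1 (A2 _ h)).
Qed.

Lemma prefix_agree (p p' : baire) L :
  (forall n, n < L -> p n = p' n) -> prefix p L = prefix p' L.
Proof. intros H. apply map_ext_in. intros a Ha. apply in_seq in Ha. apply H. lia. Qed.

Lemma answers_at_agree c p p' i L v :
  (forall n, n < L -> p n = p' n) -> answers_at c p i L v -> answers_at c p' i L v.
Proof.
  intros H [A1 A2]. split.
  - rewrite <- (prefix_agree p p' L H). exact A1.
  - intros L' h. rewrite <- (prefix_agree p p' L'); auto. intros; apply H; lia.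
Qed.

Lemma CompF_answers_at c p q i L v : CompF c p q -> answers_at c p i L v -> q i = v.
Proof. intros H W. destruct (H i) as [L0 W0]. exact (answers_at_unique _ _ _ _ _ _ _ W0 W). Qed.

Lemma least_witness (P : nat -> Prop) :
  (exists n, P n) -> exists n, P n /\ forall m, m < n -> ~ P m.
Proof.
  intros [n Hn]. revert Hn. induction n as [n IH] using lt_wf_ind. intros Hn.
  destruct (classic (exists m, m < n /\ P m)) as [[m [Hm Pm]]|Hno]; [exact (IH m Hm Pm)|].
  exists n. split; auto. intros m Hm Pm. eauto.
Qed.

Lemma finite_bound (Q : nat -> nat -> Prop) M :
  (forall m, m < M -> exists L, Q m L) ->
  exists B, forall m, m < M -> exists L, L <= B /\ Q m L.
Proof.
  induction M; intros H; [exists 0; intros; lia|].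
  destruct IHM as [B HB]; [intros; apply H; lia|].
  destruct (H M) as [L HL]; [lia|].
  exists (B + L). intros m Hm. destruct (Nat.eq_dec m M) as [->|Hne].
  - exists L. split; auto. lia.
  - destruct (HB m) as [L' [H1 H2]]; [lia|]. exists L'. split; auto. lia.
Qed.

Definition bits (y : nat -> bool) : baire := fun n => if y n then 1 else 0.

Lemma bpair_even p s j : bpair p s (2 * j) = p j.
Proof. unfold bpair. rewrite Nat.even_even, Nat.div2_double. reflexivity. Qed.

Lemma bpair_odd p s j : bpair p s (S (2 * j)) = s j.
Proof.
  unfold bpair. replace (S (2 * j)) with (2 * j + 1) by lia.
  rewrite Nat.even_odd, Nat.div2_odd'. reflexivity.
Qed.

Lemma bpair_agree p p' s L :
  (forall n, n < L -> p n = p' n) -> forall n, n < 2 * L -> bpair p s n = bpair p' s n.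
Proof.
  intros H n Hn. unfold bpair. destruct (Nat.even n); auto. apply H.
  pose proof (Nat.div2_odd n). destruct (Nat.odd n); simpl in *; lia.
Qed.

(** * Reducing [WBWT_2] to the completion of [C_N] *)

Fixpoint psum (p : baire) n := match n with 0 => 0 | S m => psum p m + p m end.

Fixpoint first_nz (s : baire) n :=
  match n with 0 => 0 | S m => ifz (first_nz s m) (s m) (first_nz s m) end.

(* After the [-1] shift, [1] is the empty word and [S (S k)] becomes [S k], which removes [k]. *)
Definition excl_name (p : baire) (n : nat) : nat := ifz (p n) 1 (S (S (psum p n))).

Definition guess (p s : baire) (i : nat) : bool :=
  match first_nz s (S i) with 0 => true | S a => S a <=? psum p (S i) end.

Fixpoint word_sum n w :=
  match n with 0 => 0 | S m => word_sum m w + word_hd (word_drop m w) end.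
Definition cWordSum := cPrim cZero
  (cComp cAdd [cProj 1; cComp cWordHd [cComp cWordDrop [cProj 0; cProj 2]]]).
Lemma eval_word_sum n w : eval cWordSum [n; w] (word_sum n w).
Proof. apply (eval_prim_rec _ _ [w] (fun n => word_sum n w)); [eval_tac | intro m; eval_tac]. Qed.
Hint Resolve eval_word_sum : eval_db.

Fixpoint word_even_sum n w :=
  match n with 0 => 0 | S m => word_even_sum m w + word_hd (word_drop (2 * m) w) end.
Definition cWordEvenSum := cPrim cZero
  (cComp cAdd [cProj 1; cComp cWordHd [cComp cWordDrop [cComp cDouble [cProj 0]; cProj 2]]]).
Lemma eval_word_even_sum n w : eval cWordEvenSum [n; w] (word_even_sum n w).
Proof.
  apply (eval_prim_rec _ _ [w] (fun n => word_even_sum n w)); [eval_tac | intro m; eval_tac].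
Qed.
Hint Resolve eval_word_even_sum : eval_db.

Fixpoint word_odd_first_nz n w :=
  match n with
  | 0 => 0
  | S m => ifz (word_odd_first_nz m w) (word_hd (word_drop (S (2 * m)) w)) (word_odd_first_nz m w)
  end.
Definition cWordOddFirstNz := cPrim cZero (cComp cIfz
  [cProj 1; cComp cWordHd [cComp cWordDrop [cComp cSucc [cComp cDouble [cProj 0]]; cProj 2]];
   cProj 1]).
Lemma eval_word_odd_first_nz n w : eval cWordOddFirstNz [n; w] (word_odd_first_nz n w).
Proof.
  apply (eval_prim_rec _ _ [w] (fun n => word_odd_first_nz n w)); [eval_tac | intro m; eval_tac].
Qed.
Hint Resolve eval_word_odd_first_nz : eval_db.

Lemma word_sum_prefix p n k : n <= k -> word_sum n (enc (prefix p k)) = psum p n.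
Proof.
  induction n; simpl; intros; auto.
  rewrite IHn by lia. f_equal. apply word_drop_prefix_inside. lia.
Qed.

Lemma word_even_sum_prefix p s n k :
  2 * n <= k -> word_even_sum n (enc (prefix (bpair p s) k)) = psum p n.
Proof.
  induction n as [|n IHn]; intros Hk; [reflexivity|]. cbn [word_even_sum psum].
  rewrite IHn, (proj2 (word_drop_prefix_inside _ (2 * n) k ltac:(lia))), bpair_even by lia.
  reflexivity.
Qed.

Lemma word_odd_first_nz_prefix p s n k :
  2 * n <= k -> word_odd_first_nz n (enc (prefix (bpair p s) k)) = first_nz s n.
Proof.
  induction n as [|n IHn]; intros Hk; [reflexivity|]. cbn [word_odd_first_nz first_nz].
  rewrite IHn, (proj2 (word_drop_prefix_inside _ (S (2 * n)) k ltac:(lia))), bpair_odd by lia.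
  reflexivity.
Qed.

Definition excl_word n w :=
  ifz (word_drop n w) 0 (S (ifz (word_hd (word_drop n w)) 1 (S (S (word_sum n w))))).
Definition cExcl := cComp cIfz [cComp cWordDrop [cProj 0; cProj 1]; cZero;
  cComp cSucc [cComp cIfz [cComp cWordHd [cComp cWordDrop [cProj 0; cProj 1]]; cOne;
    cComp cSucc [cComp cSucc [cComp cWordSum [cProj 0; cProj 1]]]]]].
Lemma eval_excl n w : eval cExcl [n; w] (excl_word n w).
Proof. unfold cExcl, excl_word, cOne. eval_tac. Qed.

Definition guess_word i w :=
  ifz (word_drop (S (2 * i)) w) 0
    (S (ifz (word_odd_first_nz (S i) w) 1
          (ifz (word_odd_first_nz (S i) w - word_even_sum (S i) w) 1 0))).
Definition cGuess := cComp cIfz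
  [cComp cWordDrop [cComp cSucc [cComp cDouble [cProj 0]]; cProj 1]; cZero;
   cComp cSucc [cComp cIfz [cComp cWordOddFirstNz [cComp cSucc [cProj 0]; cProj 1]; cOne;
     cComp cIfz [cComp cSub [cComp cWordOddFirstNz [cComp cSucc [cProj 0]; cProj 1];
                             cComp cWordEvenSum [cComp cSucc [cProj 0]; cProj 1]];
                 cOne; cZero]]]].
Lemma eval_guess i w : eval cGuess [i; w] (guess_word i w).
Proof. unfold cGuess, guess_word, cOne. eval_tac. Qed.

Lemma CompF_excl p : CompF cExcl p (excl_name p).
Proof.
  apply CompF_by_modulus with (m := fun n => n). intros n k.
  replace (if k <=? n then 0 else S (excl_name p n))
    with (excl_word n (enc (prefix p k))); [apply eval_excl|].
  unfold excl_word. destruct (Nat.leb_spec k n) as [h|h].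
  - rewrite word_drop_prefix_end by lia. reflexivity.
  - destruct (word_drop_prefix_inside p n k h) as [H1 ->].
    rewrite word_sum_prefix by lia. destruct (word_drop n _); [congruence | reflexivity].
Qed.

Lemma CompF_guess p s : CompF cGuess (bpair p s) (bits (guess p s)).
Proof.
  apply CompF_by_modulus with (m := fun i => S (2 * i)). intros i k.
  replace (if k <=? S (2 * i) then 0 else S (bits (guess p s) i))
    with (guess_word i (enc (prefix (bpair p s) k))); [apply eval_guess|].
  unfold guess_word. destruct (Nat.leb_spec k (S (2 * i))) as [h|h].
  - rewrite word_drop_prefix_end by lia. reflexivity.
  - destruct (word_drop_prefix_inside (bpair p s) _ k h) as [H1 _].
    rewrite word_odd_first_nz_prefix, word_even_sum_prefix by lia.
    destruct (word_drop _ _); [congruence|].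
    unfold bits, guess. destruct (first_nz s (S i)) as [|a]; [reflexivity|].
    destruct (Nat.leb_spec (S a) (psum p (S i))), (S a - psum p (S i)) eqn:E;
      simpl; auto; lia.
Qed.

Lemma first_nz_zero s n : (forall j, j < n -> s j = 0) -> first_nz s n = 0.
Proof. induction n; simpl; intros H; auto. rewrite IHn by auto. apply H. lia. Qed.

Lemma first_nz_after s j a : (forall i, i < j -> s i = 0) -> s j = S a ->
  forall n, j < n -> first_nz s n = S a.
Proof.
  intros H0 H1 n Hn. induction n as [|n IHn]; [lia|]. simpl.
  destruct (Nat.eq_dec j n) as [<-|Hne].
  - rewrite first_nz_zero by auto. exact H1.
  - rewrite IHn by lia. reflexivity.
Qed.

Lemma first_nz_stable s : exists v j, forall n, j < n -> first_nz s n = v.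
Proof.
  destruct (classic (exists j, s j <> 0)) as [Hex|Hnone].
  - destruct (least_witness _ Hex) as [j [Hj Hmin]].
    destruct (s j) as [|a] eqn:E; [congruence|].
    exists (S a), j. apply first_nz_after; auto.
    intros i Hi. apply NNPP. intro. eapply Hmin; eauto.
  - exists 0, 0. intros n _. apply first_nz_zero.
    intros j _. apply NNPP. intro. apply Hnone. eauto.
Qed.

Lemma minus1_first_nz q q' : minus1 q q' -> exists j, forall n, j < n -> first_nz q n = S (q' 0).
Proof.
  intros [e [He_mono [He_range He_val]]]. exists (e 0).
  apply first_nz_after.
  - intros j Hj. apply NNPP. intros Hq. apply He_range in Hq as [i <-].
    enough (e 0 <= e i) by lia.
    induction i; [lia|]. specialize (He_mono i). lia.
  - rewrite He_val. assert (q (e 0) <> 0) by (apply He_range; eauto). lia.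
Qed.

Section PartialSums.
Variable p : baire.

Lemma psum_mono a b : a <= b -> psum p a <= psum p b.
Proof. induction 1; simpl; lia. Qed.

Lemma psum_increase a b : psum p a < psum p b -> exists i, a <= i < b /\ p i <> 0.
Proof.
  induction b as [|b IHb]; simpl; intros H.
  - pose proof (psum_mono 0 a). simpl in *. lia.
  - destruct (Nat.eq_dec (p b) 0) as [E|E].
    + rewrite E, Nat.add_0_r in H. destruct (IHb H) as [i Hi]. exists i. lia.
    + destruct (Nat.le_gt_cases a b).
      * exists b. lia.
      * pose proof (psum_mono (S b) a). simpl in *. lia.
Qed.

Lemma psum_ones_from N k : (forall n, N <= n -> p n = 1) -> k <= psum p (N + k).
Proof.
  intros H. induction k; [lia|]. rewrite Nat.add_succ_r. simpl. rewrite H by lia. lia.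
Qed.

Hypothesis p_le1 : forall n, p n <= 1.

Lemma psum_le n : psum p n <= n.
Proof. induction n; simpl; auto. pose proof (p_le1 n). lia. Qed.

Lemma excl_name_delta :
  @delta (completion Aminus) (excl_name p) (Some (fun n => forall m, psum p m <= n)).
Proof.
  exists (fun i => excl_name p i - 1). split.
  - exists (fun i => i). repeat split; auto.
    + intros _. eauto.
    + intros _. unfold excl_name. destruct (p j); simpl; lia.
  - intros n. split.
    + intros Hle [i Hi]. specialize (Hle (S i)). unfold excl_name in Hi. simpl in Hle.
      destruct (p i); simpl in Hi; lia.
    + intros Hnot m. induction m as [|m IHm]; simpl; [lia|].
      pose proof (p_le1 m). destruct (p m) as [|[|]] eqn:E; [lia| |lia].
      assert (psum p m <> n); [|lia].
      intros <-. apply Hnot. exists m. unfold excl_name. rewrite E. simpl. lia.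
Qed.

End PartialSums.

Lemma cluster_false_of_bounded x y : (forall m, psum (bits x) m <= y) -> cluster x false.
Proof.
  intros Hb N. apply NNPP. intros Hno.
  assert (Hone : forall n, N <= n -> bits x n = 1).
  { intros n Hn. unfold bits. destruct (x n) eqn:E; auto. exfalso. eauto. }
  pose proof (psum_ones_from _ N (S y) Hone). specialize (Hb (N + S y)). lia.
Qed.

Lemma cluster_true_of_unbounded x :
  (forall n, exists m, n < psum (bits x) m) -> cluster x true.
Proof.
  intros Hunb N. destruct (Hunb N) as [m Hm].
  assert (psum (bits x) N <= N) by (apply psum_le; intro n; unfold bits; destruct (x n); lia).
  destruct (psum_increase (bits x) N m) as [i [Hi Hxi]]; [lia|].
  exists i. split; [lia|]. unfold bits in Hxi. destruct (x i); congruence.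
Qed.

Lemma guess_eventually_false p s y : (forall m, psum p m <= y) ->
  (exists j, forall n, j < n -> first_nz s n = S y) ->
  exists N, forall n, N <= n -> guess p s n = false.
Proof.
  intros Hb [j Hj]. exists j. intros n Hn. unfold guess.
  rewrite Hj by lia. apply Nat.leb_gt. specialize (Hb (S n)). lia.
Qed.

Lemma guess_eventually_true p s : (forall n, exists m, n < psum p m) ->
  exists N, forall n, N <= n -> guess p s n = true.
Proof.
  intros Hunb. destruct (first_nz_stable s) as [[|a] [j Hj]].
  - exists j. intros n Hn. unfold guess. rewrite Hj by lia. reflexivity.
  - destruct (Hunb a) as [m Hm]. exists (j + m). intros n Hn. unfold guess.
    rewrite Hj by lia. apply Nat.leb_le. pose proof (psum_mono p m (S n)). lia.
Qed.

Lemma guess_solves_WBWT2 x s a :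
  let A := fun n => forall m, psum (bits x) m <= n in
  @delta (completion NatR) s a -> bar CN (Some A) a -> WBWT2 x (guess (bits x) s).
Proof.
  intros A Hs Ha. destruct (classic (exists y, A y)) as [[y Hy]|Hunb].
  - destruct (Ha (ex_intro _ y Hy)) as [y' [-> Hy']]. destruct Hs as [s' [Hm <-]].
    exists false. split.
    + apply guess_eventually_false with (s' 0); auto using minus1_first_nz.
    + apply cluster_false_of_bounded with (s' 0). exact Hy'.
  - assert (Hunb' : forall n, exists m, n < psum (bits x) m).
    { intros n. apply NNPP. intros Hn. apply Hunb. exists n.
      intros m. apply Nat.nlt_ge. eauto. }
    exists true. split.
    + apply guess_eventually_true. exact Hunb'.
    + apply cluster_true_of_unbounded. exact Hunb'.
Qed.

Lemma dom_bar {X Y : rep} (f : problem X Y) x : dom (bar f) x.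
Proof.
  destruct x as [x'|]; [|exists None; exact I].
  destruct (classic (dom f x')) as [[y Hy]|Hn].
  - exists (Some y). intros _. eauto.
  - exists None. intros Hd. contradiction.
Qed.

Theorem WBWT2_le_bar_CN :
  @Wred Cantor Cantor (completion Aminus) (completion NatR) WBWT2 (bar CN).
Proof.
  exists cGuess, cExcl. intros G _ HG p x Hpx _.
  assert (Ep : p = bits x) by (apply functional_extensionality; exact Hpx). subst p.
  assert (Hle1 : forall n, bits x n <= 1) by (intro n; unfold bits; destruct (x n); lia).
  destruct (HG _ _ (excl_name_delta _ Hle1) (dom_bar CN _)) as (s & a & HGs & Hs & Ha).
  exists (bits (guess (bits x) s)), (guess (bits x) s). repeat split.
  - exists (excl_name (bits x)), s. auto using CompF_excl, CompF_guess.
  - exact (guess_solves_WBWT2 x s a Hs Ha).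
Qed.

(** * No reduction of [WBWT_2] to [C_N] *)

Definition least_realizer (k s : baire) : Prop :=
  exists n, (forall i, k i <> S n) /\ (forall m, m < n -> exists i, k i = S m) /\
            s = fun _ => n.

Lemma least_realizer_functional : functional least_realizer.
Proof.
  intros k s s' [n [A1 [A2 ->]]] [n' [B1 [B2 ->]]].
  destruct (Nat.lt_trichotomy n n') as [h|[->|h]]; auto; exfalso.
  - destruct (B2 _ h) as [i Hi]. eapply A1; eauto.
  - destruct (A2 _ h) as [i Hi]. eapply B1; eauto.
Qed.

Lemma least_realizer_realizes : @realizes Aminus NatR least_realizer CN.
Proof.
  intros k A HA [y Hy]. simpl in *.
  destruct (least_witness A (ex_intro _ y Hy)) as [n [Hn Hmin]].
  exists (fun _ => n), n. repeat split; auto. exists n. repeat split.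
  - intros i Hi. apply HA in Hn. eauto.
  - intros m Hm. apply NNPP. intro C. apply (Hmin m Hm). apply HA. exact C.
Qed.

Lemma WBWT2_total (x : nat -> bool) : dom WBWT2 x.
Proof.
  destruct (classic (cluster x true)) as [Hc|Hc].
  - exists (fun _ => true), true. split; auto. exists 0; auto.
  - exists (fun _ => false), false. split; [exists 0; auto|].
    apply not_all_ex_not in Hc as [N HN]. intros N'. exists (N + N'). split; [lia|].
    destruct (x (N + N')) eqn:E; auto. exfalso. apply HN. exists (N + N'). split; auto. lia.
Qed.

Definition pad (L : nat) (f : nat -> bool) (b : bool) : nat -> bool :=
  fun n => if n <? L then f n else b.

Section Diagonalization.
Variables cH cK : code.
Hypothesis Hred : realizes (fun p r => exists k s,
  CompF cK p k /\ least_realizer k s /\ CompF cH (bpair p s) r) WBWT2.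

Definition excluded_within (y : nat -> bool) (m L : nat) : Prop :=
  exists i L', L' <= L /\ answers_at cK (bits y) i L' (S m).

Definition never_excluded (y : nat -> bool) (mu : nat) : Prop :=
  forall i L, ~ answers_at cK (bits y) i L (S mu).

Lemma excluded_within_mono y m L L' : L <= L' -> excluded_within y m L -> excluded_within y m L'.
Proof. intros H [i [L0 [HL W]]]. exists i, L0. split; [lia | exact W]. Qed.

Lemma excluded_within_agree y y' m L : (forall n, n < L -> y n = y' n) ->
  excluded_within y m L -> excluded_within y' m L.
Proof.
  intros Hyy [i [L0 [HL W]]]. exists i, L0. split; auto.
  eapply answers_at_agree; [|exact W]. intros n Hn. unfold bits. rewrite Hyy by lia. reflexivity.
Qed.

(* The value of [C_N] seen by the reduction is pinned down by a finite prefix of the input. *)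
Lemma least_unexcluded_unique y y' L mu mu' :
  (forall n, n < L -> y n = y' n) ->
  (forall m, m < mu -> excluded_within y m L) -> never_excluded y mu ->
  (forall m, m < mu' -> excluded_within y' m L) -> never_excluded y' mu' -> mu = mu'.
Proof.
  intros Hyy Hex Hnev Hex' Hnev'.
  destruct (Nat.lt_trichotomy mu mu') as [h|[->|h]]; auto; exfalso.
  - assert (Hx : excluded_within y mu L)
      by (apply excluded_within_agree with y'; auto; intros n Hn; symmetry; auto).
    destruct Hx as [i [L0 [_ W]]]. exact (Hnev i L0 W).
  - assert (Hx : excluded_within y' mu' L) by (apply excluded_within_agree with y; auto).
    destruct Hx as [i [L0 [_ W]]]. exact (Hnev' i L0 W).
Qed.

Lemma reduction_run y : exists mu B q b N,
  (forall m, m < mu -> excluded_within y m B) /\ never_excluded y mu /\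
  CompF cH (bpair (bits y) (fun _ => mu)) q /\
  (forall n, N <= n -> q n = bits (fun _ => b) n) /\ cluster y b.
Proof.
  destruct (Hred (bits y) y (fun n => eq_refl) (WBWT2_total y))
    as (q & Y & (k & s & HK & [mu [Hnot [Hall ->]]] & HH) & HY & [b [[N HN] Hcl]]).
  destruct (finite_bound (fun m L => exists i, answers_at cK (bits y) i L (S m)) mu)
    as [B HB].
  { intros m Hm. destruct (Hall m Hm) as [i Hi]. destruct (HK i) as [L W].
    rewrite Hi in W. eauto. }
  exists mu, B, q, b, N. repeat split; auto.
  - intros m Hm. destruct (HB m Hm) as [L [HL [i W]]]. exists i, L. auto.
  - intros i L W. apply (Hnot i). exact (CompF_answers_at _ _ _ _ _ _ HK W).
  - intros n Hn. rewrite HY, HN by exact Hn. reflexivity.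
Qed.

(* [LH <= 2 * (L + j)]: the answer depends only on the first [L + j] bits of [y]. *)
Definition stage_ok (L : nat) (f : nat -> bool) (b : bool) (t j : nat) : Prop :=
  let y := pad L f b in
  exists mu i LH, t <= i /\ LH <= 2 * (L + j) /\
    answers_at cH (bpair (bits y) (fun _ => mu)) i LH (bits (fun _ => b) i) /\
    (forall m, m < mu -> excluded_within y m (L + j)) /\ never_excluded y mu.

Lemma stage_exists L f b t : exists j, 1 <= j /\ stage_ok L f b t j.
Proof.
  destruct (reduction_run (pad L f b)) as (mu & B & q & b' & N & Hex & Hnev & HH & Hq & Hcl).
  assert (b' = b) as ->.
  { destruct (Hcl L) as [n [Hn Hb]]. unfold pad in Hb.
    destruct (Nat.ltb_spec n L); [lia | symmetry; exact Hb]. }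
  destruct (HH (t + N)) as [LH W]. rewrite Hq in W by lia.
  exists (LH + B + 1). split; [lia|].
  exists mu, (t + N), LH. refine (conj _ (conj _ (conj W (conj _ Hnev)))); [lia | lia|].
  intros m Hm. apply excluded_within_mono with B; auto. lia.
Qed.

Definition stage_len (t L : nat) (f : nat -> bool) : nat :=
  proj1_sig (constructive_indefinite_description _ (stage_exists L f (Nat.even t) t)).

Lemma stage_len_spec t L f :
  1 <= stage_len t L f /\ stage_ok L f (Nat.even t) t (stage_len t L f).
Proof. unfold stage_len. destruct (constructive_indefinite_description _ _). auto. Qed.

Fixpoint stage (t : nat) : nat * (nat -> bool) :=
  match t with
  | 0 => (0, fun _ => true)
  | S t' => let (L, f) := stage t' in (L + stage_len t' L f, pad L f (Nat.even t'))
  end.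
Definition len t := fst (stage t).
Definition approx t := snd (stage t).

Lemma len_S t : len (S t) = len t + stage_len t (len t) (approx t).
Proof. unfold len, approx. simpl. destruct (stage t). reflexivity. Qed.

Lemma approx_S t : approx (S t) = pad (len t) (approx t) (Nat.even t).
Proof. unfold len, approx. simpl. destruct (stage t). reflexivity. Qed.

Lemma len_ge t : t <= len t.
Proof.
  induction t; [unfold len; simpl; lia|].
  rewrite len_S. pose proof (proj1 (stage_len_spec t (len t) (approx t))). lia.
Qed.

Lemma len_mono t t' : t <= t' -> len t <= len t'.
Proof. induction 1; [lia|]. rewrite len_S. lia. Qed.

Lemma approx_stable t t' n : t <= t' -> n < len t -> approx t' n = approx t n.
Proof.
  induction 1; intros Hn; auto.
  rewrite approx_S. unfold pad. pose proof (len_mono _ _ H).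
  destruct (Nat.ltb_spec n (len m)); auto. lia.
Qed.

Definition xlim n := approx (S n) n.

Lemma xlim_agree t n : n < len t -> xlim n = approx t n.
Proof.
  intros H. unfold xlim. destruct (Nat.le_ge_cases (S n) t).
  - symmetry. apply approx_stable; auto. pose proof (len_ge (S n)). lia.
  - apply approx_stable; auto.
Qed.

Lemma stage_forces_output mu B q t :
  (forall m, m < mu -> excluded_within xlim m B) -> never_excluded xlim mu ->
  CompF cH (bpair (bits xlim) (fun _ => mu)) q -> B <= t ->
  exists i, t <= i /\ q i = bits (fun _ => Nat.even t) i.
Proof.
  intros Hex Hnev HH Ht.
  destruct (stage_len_spec t (len t) (approx t))
    as [_ (mu' & i & LH & Hi & HLH & W & Hex' & Hnev')].
  rewrite <- len_S, <- approx_S in *.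
  assert (Agr : forall n, n < len (S t) -> approx (S t) n = xlim n)
    by (intros; symmetry; apply xlim_agree; auto).
  assert (mu' = mu) as ->.
  { apply (least_unexcluded_unique _ _ (len (S t)) _ _ Agr Hex' Hnev'); auto.
    intros m Hm. apply excluded_within_mono with B; auto.
    pose proof (len_ge t). pose proof (len_mono t (S t)). lia. }
  exists i. split; auto. eapply CompF_answers_at; [exact HH|].
  eapply answers_at_agree; [|exact W].
  intros n Hn. apply bpair_agree with (L := len (S t)); [|lia].
  intros n' Hn'. unfold bits. rewrite Agr by exact Hn'. reflexivity.
Qed.

Lemma diagonalization_absurd : False.
Proof.
  destruct (reduction_run xlim) as (mu & B & q & b & N & Hex & Hnev & HH & Hq & _).
  assert (Ht : exists t, B + N <= t /\ Nat.even t <> b).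
  { destruct (Bool.bool_dec (Nat.even (B + N)) b) as [E|E]; [|eauto].
    exists (S (B + N)). split; [lia|].
    rewrite Nat.even_succ, <- Nat.negb_even, E. destruct b; discriminate. }
  destruct Ht as [t [Ht Htb]].
  destruct (stage_forces_output mu B q t Hex Hnev HH ltac:(lia)) as [i [Hi Hqi]].
  rewrite Hq in Hqi by lia. unfold bits in Hqi.
  destruct (Nat.even t), b; simpl in *; congruence.
Qed.

End Diagonalization.

Theorem WBWT2_not_le_CN : ~ @Wred Cantor Cantor Aminus NatR WBWT2 CN.
Proof.
  intros [cH [cK Hred]].
  exact (diagonalization_absurd cH cK
           (Hred _ least_realizer_functional least_realizer_realizes)).
Qed.

Theorem proposition8p9 :
  @Wred Cantor Cantor (completion Aminus) (completion NatR) WBWT2 (bar CN) /\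
  ~ @Wred Cantor Cantor Aminus NatR WBWT2 CN.
Proof. exact (conj WBWT2_le_bar_CN WBWT2_not_le_CN). Qed.
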